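(* Let $\mathcal{M}$ be a small $n$-abelian category, let $M\in(\mathcal{M},\mathcal{G})$ be a mono functor and let $M\hookrightarrow E$ be an essential extension of $M$ in $(\mathcal{M},\mathcal{G})$. Then $E$ is a mono functor.
   Context: $\mathcal{G}$ is the category of abelian groups and $(\mathcal{M},\mathcal{G})$ the abelian category of additive covariant functors $\mathcal{M}\to\mathcal{G}$. A functor $F\in(\mathcal{M},\mathcal{G})$ is a mono functor if $F(f)$ is injective for every monomorphism $f$ of $\mathcal{M}$. A monomorphism $A\to B$ is an essential extension if for every nonzero monomorphism $B'\to B$ the images of $A\to B$ and $B'\to B$ have nonzero intersection. An $n$-abelian category is an idempotent complete additive category in which every morphism has an $n$-kernel and an $n$-cokernel, and in which every monomorphism (resp. epimorphism) together with any of its $n$-cokernels (resp. $n$-kernels) forms an $n$-exact sequence. *)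

From HB Require Import structures.
From mathcomp Require Import all_boot all_algebra.
Set Implicit Arguments. Unset Strict Implicit. Unset Printing Implicit Defensive.
Import GRing.Theory.
Local Open Scope ring_scope.

(* ---------- Preadditive categories (Ab-enriched), composition written
   in diagrammatic order: comp f g = g o f. ---------- *)
Record precat := PreCat {
  Ob : Type;
  Hom : Ob -> Ob -> zmodType;
  idm : forall A, Hom A A;
  comp : forall A B D, Hom A B -> Hom B D -> Hom A D;
  compA : forall A B D E (f : Hom A B) (g : Hom B D) (h : Hom D E),
      comp f (comp g h) = comp (comp f g) h;
  comp1m : forall A B (f : Hom A B), comp (idm A) f = f;
  compm1 : forall A B (f : Hom A B), comp f (idm B) = f;
  compDl : forall A B D (f f' : Hom A B) (g : Hom B D),
      comp (f + f') g = comp f g + comp f' g;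
  compDr : forall A B D (f : Hom A B) (g g' : Hom B D),
      comp f (g + g') = comp f g + comp f g'
}.
Arguments Hom : clear implicits.
Arguments idm {_} A.
Arguments comp {_ A B D} f g.

Definition opcat (C : precat) : precat :=
  @PreCat (Ob C) (fun A B => Hom C B A) (@idm C)
    (fun A B D f g => comp g f)
    (fun A B D E f g h => esym (compA h g f))
    (fun A B f => compm1 f)
    (fun A B f => comp1m f)
    (fun A B D f f' g => compDr g f f')
    (fun A B D f g g' => compDl g g' f).

Unset Implicit Arguments.
Section Cat.
Variable C : precat.

Definition is_mono {A B : Ob C} (f : Hom C A B) : Prop :=
  forall Y (g h : Hom C Y A), comp g f = comp h f -> g = h.

Definition is_additive : Prop :=
  (exists Z : Ob C, idm Z = 0) /\
  forall A B : Ob C, exists (P : Ob C) (i1 : Hom C A P) (i2 : Hom C B P)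
                            (p1 : Hom C P A) (p2 : Hom C P B),
    [/\ comp i1 p1 = idm A, comp i2 p2 = idm B,
        comp i1 p2 = 0, comp i2 p1 = 0 &
        comp p1 i1 + comp p2 i2 = idm P].

Definition idempotent_complete : Prop :=
  forall (A : Ob C) (e : Hom C A A), comp e e = e ->
    exists (B : Ob C) (r : Hom C A B) (s : Hom C B A),
      comp r s = e /\ comp s r = idm B.

(* A sequence X^0 -> X^1 -> X^2 -> ... (only X^0 .. X^{n+1} matter). *)
(* (d^1,...,d^n) is an n-cokernel of d^0: for every Y the sequence
   0 -> C(X^{n+1},Y) -> C(X^n,Y) -> ... -> C(X^1,Y) -> C(X^0,Y) is exact. *)
Definition is_ncoker (n : nat) (X : nat -> Ob C)
    (d : forall k, Hom C (X k) (X k.+1)) : Prop :=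
  (forall k, (k < n)%N -> comp (d k) (d k.+1) = 0) /\
  forall Y : Ob C,
    (forall g : Hom C (X n.+1) Y, comp (d n) g = 0 -> g = 0) /\
    (forall k, (k < n)%N -> forall g : Hom C (X k.+1) Y,
        comp (d k) g = 0 -> exists h : Hom C (X k.+2) Y, g = comp (d k.+1) h).

(* (d^0,...,d^{n-1}) is an n-kernel of d^n: for every Y the sequence
   0 -> C(Y,X^0) -> C(Y,X^1) -> ... -> C(Y,X^{n+1}) is exact. *)
Definition is_nker (n : nat) (X : nat -> Ob C)
    (d : forall k, Hom C (X k) (X k.+1)) : Prop :=
  (forall k, (k < n)%N -> comp (d k) (d k.+1) = 0) /\
  forall Y : Ob C,
    (forall g : Hom C Y (X 0), comp g (d 0) = 0 -> g = 0) /\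
    (forall k, (k < n)%N -> forall g : Hom C Y (X k.+1),
        comp g (d k.+1) = 0 -> exists h : Hom C Y (X k), g = comp h (d k)).

Definition is_nexact (n : nat) (X : nat -> Ob C)
    (d : forall k, Hom C (X k) (X k.+1)) : Prop :=
  is_ncoker n X d /\ is_nker n X d.

Definition cobj (A B : Ob C) (Y : nat -> Ob C) (k : nat) : Ob C :=
  match k with 0 => A | 1 => B | (j.+2)%N => Y j end.

Definition cmor {A B : Ob C} (f : Hom C A B) {Y : nat -> Ob C}
    (e0 : Hom C B (Y 0)) (e : forall j, Hom C (Y j) (Y j.+1)) :
    forall k, Hom C (cobj A B Y k) (cobj A B Y k.+1) :=
  fun k => match k as k0 return Hom C (cobj A B Y k0) (cobj A B Y k0.+1) with
           | 0 => f | 1 => e0 | (j.+2)%N => e j end.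

Definition has_ncokernels (n : nat) : Prop :=
  forall (A B : Ob C) (f : Hom C A B),
    exists (Y : nat -> Ob C) (e0 : Hom C B (Y 0)) (e : forall j, Hom C (Y j) (Y j.+1)),
      is_ncoker n (cobj A B Y) (cmor f e0 e).

Definition mono_ncoker_exact (n : nat) : Prop :=
  forall (A B : Ob C) (f : Hom C A B), is_mono f ->
    forall (Y : nat -> Ob C) (e0 : Hom C B (Y 0)) (e : forall j, Hom C (Y j) (Y j.+1)),
      is_ncoker n (cobj A B Y) (cmor f e0 e) ->
      is_nexact n (cobj A B Y) (cmor f e0 e).
End Cat.

(* n-abelian category (Jasso).  n-kernels, epimorphisms and the axiom
   (A2^op) are expressed via the opposite category: an n-kernel of f in C
   is exactly an n-cokernel of f in C^op (with the sequence reversed),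
   an epimorphism is a monomorphism of C^op, and n-exactness is self-dual. *)
Definition n_abelian (n : nat) (C : precat) : Prop :=
  [/\ is_additive C, idempotent_complete C,
      has_ncokernels C n /\ has_ncokernels (opcat C) n &
      mono_ncoker_exact C n /\ mono_ncoker_exact (opcat C) n].

Record addfunctor (C : precat) := AddFunctor {
  Fob : Ob C -> zmodType;
  Fmap : forall A B : Ob C, Hom C A B -> Fob A -> Fob B;
  Fmap_id : forall A (x : Fob A), Fmap A A (idm A) x = x;
  Fmap_comp : forall A B D (f : Hom C A B) (g : Hom C B D) (x : Fob A),
      Fmap A D (comp f g) x = Fmap B D g (Fmap A B f x);
  Fmap_hom : forall A B (f : Hom C A B) (x y : Fob A),
      Fmap A B f (x + y) = Fmap A B f x + Fmap A B f y;
  Fmap_add : forall A B (f g : Hom C A B) (x : Fob A),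
      Fmap A B (f + g) x = Fmap A B f x + Fmap A B g x
}.
Arguments Fmap {C} _ {A B} _ _.
Arguments Fob {C} _ _.

Record nattrans {C : precat} (F G : addfunctor C) := NatTrans {
  ntc : forall A : Ob C, Fob F A -> Fob G A;
  ntc_hom : forall A (x y : Fob F A), ntc A (x + y) = ntc A x + ntc A y;
  ntc_nat : forall A B (f : Hom C A B) (x : Fob F A),
      ntc B (Fmap F f x) = Fmap G f (ntc A x)
}.
Arguments ntc {C F G} _ _ _.

Section FunCat.
Variable C : precat.

Definition nt_mono {F G : addfunctor C} (a : nattrans F G) : Prop :=
  forall (H : addfunctor C) (b b' : nattrans H F),
    (forall A x, ntc a A (ntc b A x) = ntc a A (ntc b' A x)) ->
    forall A x, ntc b A x = ntc b' A x.

Definition nt_nonzero {F G : addfunctor C} (a : nattrans F G) : Prop :=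
  exists A x, ntc a A x != 0.

Definition essential_ext {F G : addfunctor C} (a : nattrans F G) : Prop :=
  nt_mono a /\
  forall (G' : addfunctor C) (b : nattrans G' G), nt_mono b -> nt_nonzero b ->
    exists (A : Ob C) (x : Fob F A) (y : Fob G' A),
      ntc a A x = ntc b A y /\ ntc a A x != 0.

Definition mono_functor (F : addfunctor C) : Prop :=
  forall (A B : Ob C) (f : Hom C A B), is_mono C f -> injective (Fmap F f).
End FunCat.

(* Suppose f : A -> B is a monomorphism and 0 <> x in E(A) with E(f) x = 0.
   The subfunctor of E generated by x is nonzero, so by essentiality some
   nonzero i(m), m in M(A'), equals E(g) x for a morphism g : A -> A'.  In an
   n-abelian category f and g fit into a commutative square g f' = f g' with
   f' mono (take the first map of an n-cokernel of [f, -g] : A -> B (+) A').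
   Then i(M(f') m) = E(g') E(f) x = 0, so M(f') m = 0 and m = 0 because M is
   a mono functor: a contradiction. *)
From HB Require Import structures.
From Pilot Require Import Defs.
From mathcomp Require Import all_boot all_algebra.
From Stdlib Require Import ClassicalEpsilon.
Import GRing.Theory.
Local Open Scope ring_scope.

Section AdditiveMaps.
Variables (U V : zmodType) (f : U -> V).
Hypothesis fD : {morph f : x y / x + y}.

Lemma morphD_0 : f 0 = 0.
Proof. by apply: (addrI (f 0)); rewrite -fD !addr0. Qed.

Lemma morphD_B : {morph f : x y / x - y}.
Proof.
move=> x y; apply: (addrI (f y)).
by rewrite -fD addrC subrK addrC subrK.
Qed.
End AdditiveMaps.
Arguments morphD_0 {U V f}.
Arguments morphD_B {U V f}.

HB.instance Definition _ (C : precat) (F : addfunctor C) (A B : Ob C)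
    (f : Defs.Hom C A B) :=
  GRing.isZmodMorphism.Build _ _ (Fmap F f) (morphD_B (@Fmap_hom C F A B f)).

HB.instance Definition _ (C : precat) (F G : addfunctor C) (a : nattrans F G)
    (A : Ob C) :=
  GRing.isZmodMorphism.Build _ _ (ntc a A) (morphD_B (@ntc_hom C F G a A)).

Section PreadditiveCategory.
Variable C : precat.

Lemma comp0m A B D (g : Defs.Hom C B D) : Defs.comp (0 : Defs.Hom C A B) g = 0.
Proof. exact: (morphD_0 (fun u v => @Defs.compDl C A B D u v g)). Qed.

Lemma compm0 A B D (f : Defs.Hom C A B) : Defs.comp f (0 : Defs.Hom C B D) = 0.
Proof. exact: (morphD_0 (@Defs.compDr C A B D f)). Qed.

Lemma compBl A B D (f f' : Defs.Hom C A B) (g : Defs.Hom C B D) :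
  Defs.comp (f - f') g = Defs.comp f g - Defs.comp f' g.
Proof. exact: (morphD_B (fun u v => @Defs.compDl C A B D u v g)). Qed.

Lemma monoP A B (f : Defs.Hom C A B) :
  (forall Y (t : Defs.Hom C Y A), Defs.comp t f = 0 -> t = 0) -> is_mono C f.
Proof.
move=> f0 Y g h e; apply/eqP; rewrite -subr_eq0; apply/eqP.
by apply: f0; rewrite compBl e subrr.
Qed.

Lemma Fmap0f (F : addfunctor C) A B (x : Fob F A) :
  Fmap F (0 : Defs.Hom C A B) x = 0.
Proof. exact: (morphD_0 (fun u v => @Fmap_add C F A B u v x)). Qed.

Lemma FmapBf (F : addfunctor C) A B (f g : Defs.Hom C A B) (x : Fob F A) :
  Fmap F (f - g) x = Fmap F f x - Fmap F g x.
Proof. exact: (morphD_B (fun u v => @Fmap_add C F A B u v x)). Qed.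
End PreadditiveCategory.

Section WeakPushout.
Variables (n : nat) (C : precat).
Hypotheses (n_gt0 : (0 < n)%N) (C_additive : is_additive C).
Hypotheses (C_ncoker : has_ncokernels C n) (C_mono_exact : mono_ncoker_exact C n).

(* The first map e0 of an n-cokernel of the mono h := [f, -g] : A -> B (+) X
   is a cokernel of h with kernel h; its components form the square. *)
Lemma mono_weak_pushout {A B X} (f : Defs.Hom C A B) (g : Defs.Hom C A X) :
  is_mono C f ->
  exists (Y : Ob C) (f' : Defs.Hom C X Y) (g' : Defs.Hom C B Y),
    is_mono C f' /\ Defs.comp g f' = Defs.comp f g'.
Proof.
move=> f_mono; have [_ biprod] := C_additive.
have [P [i1 [i2 [p1 [p2 [i1p1 i2p2 _ i2p1 _]]]]]] := biprod B X.
pose h := Defs.comp f i1 - Defs.comp g i2.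
have hp1 : Defs.comp h p1 = f.
  by rewrite /h compBl -!Defs.compA i1p1 i2p1 Defs.compm1 compm0 subr0.
have h_mono : is_mono C h.
  by move=> Z s s' e; apply: f_mono; rewrite -hp1 !Defs.compA e.
have [Y [e0 [e h_coker]]] := C_ncoker _ _ h.
have [[h_complex _] [_ h_ker]] := C_mono_exact _ _ _ h_mono _ _ _ h_coker.
have he0 : Defs.comp h e0 = 0 := h_complex 0%N n_gt0.
exists (Y 0%N), (Defs.comp i2 e0), (Defs.comp i1 e0); split.
  apply: monoP => Z t te0.
  have [s ts] := (h_ker Z).2 0%N n_gt0 (Defs.comp t i2) (etrans (esym (Defs.compA _ _ _)) te0).
  have s0 : s = 0.
    apply: f_mono; rewrite comp0m -hp1 Defs.compA -ts.
    by rewrite -Defs.compA i2p1 compm0.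
  by rewrite -[t]Defs.compm1 -i2p2 Defs.compA ts s0 !comp0m.
apply/eqP; rewrite eq_sym -subr_eq0 !Defs.compA -compBl.
by rewrite -/h he0.
Qed.
End WeakPushout.
Arguments mono_weak_pushout {n C} _ _ _ _ {A B X}.

Section RepresentableFunctor.
Variables (C : precat) (A : Ob C).

Definition hom_functor : addfunctor C.
Proof.
refine (@AddFunctor C (fun X => Defs.Hom C A X) (fun X Y g h => Defs.comp h g)
  _ _ _ _).
- by move=> X h; rewrite Defs.compm1.
- by move=> X Y Z f g h; rewrite Defs.compA.
- by move=> X Y f a b; rewrite Defs.compDl.
- by move=> X Y f g a; rewrite Defs.compDr.
Defined.

Definition yoneda_nt (F : addfunctor C) (x : Fob F A) : nattrans hom_functor F.
Proof.
refine (@NatTrans C hom_functor F (fun X h => Fmap F h x) _ _).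
- by move=> X a b; rewrite Fmap_add.
- by move=> X Y f h; rewrite /= Fmap_comp.
Defined.
End RepresentableFunctor.
Arguments yoneda_nt {C A F}.

(* Test a mono natural transformation on the two Yoneda maps C(A,-) -> F. *)
Lemma nt_mono_inj {C : precat} {F G : addfunctor C} {a : nattrans F G} :
  nt_mono C a -> forall A, injective (ntc a A).
Proof.
move=> a_mono A x1 x2 e.
have := a_mono _ (yoneda_nt x1) (yoneda_nt x2) _ A (Defs.idm A).
rewrite /= !Fmap_id; apply=> X h /=.
by rewrite !ntc_nat e.
Qed.

Definition pbool (P : Prop) : bool := if excluded_middle_informative P then true else false.

Lemma pboolP (P : Prop) : reflect P (pbool P).
Proof. by rewrite /pbool; case: excluded_middle_informative => p; constructor. Qed.

Section GeneratedSubfunctor.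
Variables (C : precat) (E : addfunctor C) (A : Ob C) (x : Fob E A).

Section Component.
Variable X : Ob C.

Definition gen_pred : pred (Fob E X) :=
  fun y => pbool (exists g : Defs.Hom C A X, y = Fmap E g x).

Lemma gen_pred_zmod_closed : zmod_closed gen_pred.
Proof.
split; first by apply/pboolP; exists 0; rewrite Fmap0f.
move=> u v /pboolP[g ->] /pboolP[h ->].
by apply/pboolP; exists (g - h); rewrite FmapBf.
Qed.

HB.instance Definition _ :=
  GRing.isZmodClosed.Build (Fob E X) gen_pred gen_pred_zmod_closed.

Record gen_sub := GenSub { gen_val : Fob E X; gen_valP : gen_val \in gen_pred }.
HB.instance Definition _ := [isSub for gen_val].
HB.instance Definition _ := [Choice of gen_sub by <:].
HB.instance Definition _ := [SubChoice_isSubZmodule of gen_sub by <:].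
End Component.
Arguments gen_val {X}.
Arguments GenSub {X gen_val}.

Lemma gen_map_subproof {X Y} (g : Defs.Hom C X Y) (y : gen_sub X) :
  Fmap E g (gen_val y) \in gen_pred Y.
Proof.
case: y => y /= /pboolP[h ->]; apply/pboolP.
by exists (Defs.comp h g); rewrite Fmap_comp.
Qed.

Definition gen_functor : addfunctor C.
Proof.
refine (@AddFunctor C gen_sub
  (fun X Y g y => GenSub (gen_map_subproof g y)) _ _ _ _).
- by move=> X y; apply: val_inj; rewrite /= Fmap_id.
- by move=> X Y Z f g y; apply: val_inj; rewrite /= Fmap_comp.
- by move=> X Y f a b; apply: val_inj; rewrite /= Fmap_hom.
- by move=> X Y f g a; apply: val_inj; rewrite /= Fmap_add.
Defined.

Definition gen_incl : nattrans gen_functor E.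
Proof. by refine (@NatTrans C gen_functor E (fun X y => gen_val y) _ _). Defined.

Lemma gen_incl_mono : nt_mono C gen_incl.
Proof. by move=> H b b' bb' X y; apply: val_inj; apply: bb'. Qed.

Lemma gen_incl_nonzero : x != 0 -> nt_nonzero C gen_incl.
Proof.
move=> x_neq0; have x_gen : x \in gen_pred A.
  by apply/pboolP; exists (Defs.idm A); rewrite Fmap_id.
by exists A, (GenSub x_gen).
Qed.

Lemma gen_inclP X (y : gen_sub X) : exists g, ntc gen_incl X y = Fmap E g x.
Proof. by case: y => y /= /pboolP. Qed.
End GeneratedSubfunctor.
Arguments gen_incl_mono {C E A}.
Arguments gen_incl_nonzero {C E A x}.
Arguments gen_inclP {C E A x X}.

Theorem mainTheorem4 (n : nat) (Hn : (0 < n)%N) (C : precat)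
    (HC : n_abelian n C) (M E : addfunctor C) (i : nattrans M E) :
  mono_functor C M -> essential_ext C i -> mono_functor C E.
Proof.
move=> M_mono [i_mono i_ess] A B f f_mono; apply: raddf_inj => x fx0.
apply/eqP; apply: contraT => x_neq0.
have [A' [m [y [im_y im_neq0]]]] :=
  i_ess _ _ (gen_incl_mono x) (gen_incl_nonzero x_neq0).
have [g y_def] := gen_inclP y.
have [HCadd _ [HCcoker _] [HCexact _]] := HC.
have [Y [f' [g' [f'_mono sq]]]] :=
  mono_weak_pushout Hn HCadd HCcoker HCexact f g f_mono.
have m0 : m = 0.
  apply: (M_mono _ _ _ f'_mono); rewrite raddf0.
  apply: (nt_mono_inj i_mono); rewrite raddf0 ntc_nat im_y y_def.
  by rewrite -Fmap_comp sq Fmap_comp fx0 raddf0.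
by move: im_neq0; rewrite m0 raddf0 eqxx.
Qed.
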